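(* Let $K\ge 2$, $a\ge 1$, $b\ge 1$ be integers and $M\ge 0$. For the $(K,a,b)$ coded caching problem for location-based content with cache size $M$: if $K$ is even then $R^\star_{\rm u}\le 2R^\star$, and if $K$ is odd then $R^\star_{\rm u}\le 3R^\star$.
   Context: For integers $x\le y$, $[x:y]=\{x,x+1,\dots,y\}$ and $[n]=[1:n]$. For integers $c$ and $m\ge1$, $\langle c\rangle_m$ denotes the unique element of $\{1,\dots,m\}$ congruent to $c$ modulo $m$. The $(K,a,b)$ coded caching problem for location-based content: a server has $N=K(a+b)$ files $W_1,\dots,W_N$, each consisting of $B$ independent uniformly distributed bits (any subpacketization of files is allowed). There are $K$ cache nodes, each storing $MB$ bits, and $K$ users, user $k$ having free access to cache node $k$ only. For $k\in[K]$ define $\mathcal D_{k,1}=[(k-1)(a+b)+1:ka+(k-1)b]$, $\mathcal D_{k,2}=[ka+(k-1)b+1:k(a+b)]$, $\mathcal D_{k,3}=\mathcal D_{\langle k+1\rangle_K,1}$, and $\mathcal D_k=\mathcal D_{k,1}\cup\mathcal D_{k,2}\cup\mathcal D_{k,3}$. A scheme consists of: placement functions $Z_k=\phi_k(W_1,\dots,W_N)\in\{0,1\}^{MB}$ for $k\in[K]$, chosen without knowledge of demands; for every demand vector $\mathbf d=(d_1,\dots,d_K)\in\mathcal D_1\times\cdots\times\mathcal D_K$, a transmitted message $X=\psi(\mathbf d,W_1,\dots,W_N)\in\{0,1\}^{RB}$ broadcast to all users; and decoding functions such that, for every such $\mathbf d$ and every $k$, user $k$ recovers $W_{d_k}$ exactly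 from $(\mathbf d,Z_k,X)$. The number $R$ is the (worst-case) load of the scheme. The optimal load $R^\star$ is the infimum of $R$ over all schemes (and all $B$). The placement is uncoded if each $Z_k$ consists of a subset of the bits of the files copied directly; $R^\star_{\rm u}$ is the infimum of loads over schemes with uncoded placement. *)

From HB Require Import structures.
From mathcomp Require Import all_boot all_order all_algebra.
From mathcomp Require Import classical_sets reals.
Set Implicit Arguments. Unset Strict Implicit. Unset Printing Implicit Defensive.
Import Order.TTheory GRing.Theory Num.Theory.
Local Open Scope classical_set_scope.

(* Paper indices are 1-based: user/cache k (paper) is ordinal k-1 here,
   file j (paper, j in [1:N]) is ordinal j-1 here. *)

Definition inD1 (a b k j : nat) : bool :=
  ((k.-1 * (a + b)).+1 <= j) && (j <= k * a + k.-1 * b).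
Definition inD2 (a b k j : nat) : bool :=
  ((k * a + k.-1 * b).+1 <= j) && (j <= k * (a + b)).
Definition cycK (K c : nat) : nat := (c.-1 %% K).+1.
Definition inD (K a b k j : nat) : bool :=
  [|| inD1 a b k j, inD2 a b k j | inD1 a b (cycK K k.+1) j].

Definition bits (n : nat) := {ffun 'I_n -> bool}.
Definition file (B : nat) := bits B.
Definition library (N B : nat) := {ffun 'I_N -> file B}.
Definition demand (K N : nat) := {ffun 'I_K -> 'I_N}.

Definition valid_demand (K a b : nat) (d : demand K (K * (a + b))) : Prop :=
  forall k : 'I_K, inD K a b k.+1 (d k).+1.

Definition uncoded_placement (K N B c : nat)
  (phi : 'I_K -> library N B -> bits c) : Prop :=
  exists pos : 'I_K -> 'I_c -> 'I_N * 'I_B,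
    forall k, injective (pos k) /\
      forall (W : library N B) (i : 'I_c), phi k W i = W (pos k i).1 (pos k i).2.

(* Existence of a (zero-error) scheme with file size B bits, cache size c bits
   per node and message size r bits; if unc, placement must be uncoded. *)
Definition scheme_exists (unc : bool) (K a b B c r : nat) : Prop :=
  exists (phi : 'I_K -> library (K * (a + b)) B -> bits c)
         (psi : demand K (K * (a + b)) -> library (K * (a + b)) B -> bits r)
         (mu : demand K (K * (a + b)) -> 'I_K -> bits c -> bits r -> file B),
    (unc -> @uncoded_placement K (K * (a + b)) B c phi) /\
    forall d, @valid_demand K a b d ->
      forall (W : library (K * (a + b)) B) (k : 'I_K),
        mu d k (phi k W) (psi d W) = W (d k).

Local Open Scope ring_scope.

Definition loads (R : realType) (unc : bool) (K a b : nat) (M : R) : set R :=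
  [set x | exists B c r : nat, (0 < B)%N /\ (c%:R <= M * B%:R) /\
       x = r%:R / B%:R /\ scheme_exists unc K a b B c r].

Definition Ropt (R : realType) K a b (M : R) : R := inf (loads false K a b M).
Definition Ropt_u (R : realType) K a b (M : R) : R := inf (loads true K a b M).

From HB Require Import structures.
From mathcomp Require Import all_boot all_order all_algebra.
From mathcomp Require Import classical_sets reals.
From mathcomp Require Import zify ring lra.
Import Order.TTheory GRing.Theory Num.Theory.

Set Implicit Arguments.
Unset Strict Implicit.
Unset Printing Implicit Defensive.

(* Order-optimality of uncoded placement for location-based coded caching.
   Write q = 2a + b and N = K(a + b); users and files are numbered from 0.

   - The demand set D_k of user k is the cyclic window of q consecutive files
     starting at file k(a + b) (Section Windows).
   - Upper bound: node k caches the first t bits of each of its q files and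
     the server sends the last s bits of every requested file.  This uncoded
     scheme has cache size q t and load K s, with files of t + s bits; taking
     t/(t + s) close to M/q gives R*_u <= K (1 - M/q)^+  (Ropt_u_le).
   - Lower bound (cut-set): the windows of the K/2 even users are disjoint,
     and the q demands "every user asks for the j-th file of its window"
     together reveal all (K/2) q files of those windows to these users.  So
     (K/2) q B <= (K/2) c + q r, whence R* >= (K/2) (1 - M/q)^+  (Ropt_ge).
   - The ratio of the two bounds is K / (K/2), which is 2 for K even and at
     most 3 for K odd (le_half_mul). *)

Section Windows.
Variables K a b : nat.
Local Notation q := (2 * a + b).
Local Notation N := (K * (a + b)).

Definition window_file (k p : nat) : nat := (k * (a + b) + p) %% N.

(* Explicit form: the first a + b files of the window are D_{k,1} u D_{k,2},
   the remaining a files are the start of the block of user k + 1 (mod K). *)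
Lemma window_fileE k p : k < K -> p < q ->
  window_file k p =
  if p < a + b then k * (a + b) + p else (k.+1 %% K) * (a + b) + (p - (a + b)).
Proof.
move=> kK pq; rewrite /window_file; case: ifP => pab.
  rewrite modn_small //; have : k.+1 * (a + b) <= K * (a + b) by rewrite leq_mul2r kK orbT.
  rewrite mulSn; lia.
have -> : k * (a + b) + p = k.+1 * (a + b) + (p - (a + b)) by rewrite mulSnr; lia.
have ab0 : 0 < a + b by lia.
rewrite -modnDml -muln_modl // modn_small //.
have mK : k.+1 %% K < K by rewrite ltn_pmod //; lia.
have : (k.+1 %% K).+1 * (a + b) <= K * (a + b) by rewrite leq_mul2r mK orbT.
rewrite mulSn; lia.
Qed.

Lemma window_file_lt (k : 'I_K) p : p < q -> window_file k p < N.
Proof. by move=> pq; rewrite ltn_pmod // muln_gt0; have := ltn_ord k; lia. Qed.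

Definition file_of (k : 'I_K) (p : 'I_q) : 'I_N := Ordinal (window_file_lt k (ltn_ord p)).

Lemma inD_window k f : k < K -> inD K a b k.+1 f.+1 -> exists2 p, p < q & window_file k p = f.
Proof.
move=> kK; rewrite /inD /inD1 /inD2 /cycK /=.
have : k.+1 %% K < K by rewrite ltn_pmod //; lia.
set m := k.+1 %% K => mK.
case/or3P => /andP [lo hi].
- exists (f - k * (a + b)); [lia | rewrite window_fileE; [rewrite ifT|..]; lia].
- exists (f - k * (a + b)); [lia | rewrite window_fileE; [rewrite ifT|..]; lia].
- exists (f - m * (a + b) + (a + b)); [lia | rewrite window_fileE; [rewrite ifF|..]; lia].
Qed.

Lemma inD_file_of (k : 'I_K) (f : 'I_N) : inD K a b k.+1 f.+1 -> exists p, file_of k p = f.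
Proof.
by case/(inD_window (ltn_ord k)) => p pq fE; exists (Ordinal pq); apply: val_inj.
Qed.

(* With at least two users the window (q files) is shorter than the library
   (N files), so its files are pairwise distinct and all belong to D_k. *)
Hypothesis K2 : 2 <= K.

Lemma window_file_inj k p p' : p < q -> p' < q ->
  window_file k p = window_file k p' -> p = p'.
Proof.
move=> pq p'q /eqP; rewrite /window_file eqn_modDl.
have qN : q <= N.
  have : 2 * (a + b) <= K * (a + b) by rewrite leq_mul2r K2 orbT.
  lia.
by rewrite !modn_small //; [move/eqP | lia | lia].
Qed.

Lemma window_file_inD k p : k < K -> p < q -> inD K a b k.+1 (window_file k p).+1.
Proof.
move=> kK pq; rewrite window_fileE // /inD /inD1 /inD2 /cycK /=.
have : k.+1 %% K < K by rewrite ltn_pmod //; lia.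
case: ifP => pab mK; lia.
Qed.

Lemma file_of_inj k : injective (file_of k).
Proof. move=> p p' [] /(window_file_inj (ltn_ord p) (ltn_ord p')); exact: val_inj. Qed.

Lemma file_of_inD (k : 'I_K) p : inD K a b k.+1 (file_of k p).+1.
Proof. exact: window_file_inD. Qed.
End Windows.

(* An explicit inverse of the bijection 'I_m * 'I_n -> 'I_(m * n) of the
   matrix library, used to index cache and message bits by pairs. *)
Section Pairing.
Variables m n : nat.

Definition unpair (x : 'I_(m * n)) : 'I_m * 'I_n :=
  enum_val (cast_ord (esym (mxvec_cast m n)) x).

Lemma unpairK i j : unpair (mxvec_index i j) = (i, j).
Proof. by rewrite /unpair cast_ordK enum_rankK. Qed.

Lemma unpair_inj : injective unpair.
Proof. by move=> x y /enum_val_inj /(congr1 (cast_ord (mxvec_cast m n))); rewrite !cast_ordKV. Qed.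
End Pairing.

Section UncodedScheme.
Variables K a b t s : nat.
Hypothesis K2 : 2 <= K.
Local Notation q := (2 * a + b).
Local Notation N := (K * (a + b)).

Definition cache_pos (k : 'I_K) (x : 'I_(q * t)) : 'I_N * 'I_(t + s) :=
  (file_of k (unpair x).1, lshift s (unpair x).2).

Definition cache (k : 'I_K) (W : library N (t + s)) : bits (q * t) :=
  [ffun x => W (cache_pos k x).1 (cache_pos k x).2].

Definition message (d : demand K N) (W : library N (t + s)) : bits (K * s) :=
  [ffun z => W (d (unpair z).1) (rshift t (unpair z).2)].

Definition decode (d : demand K N) (k : 'I_K) (Z : bits (q * t)) (X : bits (K * s)) :
    file (t + s) :=
  [ffun y => match split y with
   | inl h => if [pick p | file_of k p == d k] is Some p then Z (mxvec_index p h) else false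
   | inr y' => X (mxvec_index k y') end].

Lemma cache_pos_inj k : injective (cache_pos k).
Proof.
move=> x x' E; have /(file_of_inj K2) p_eq := congr1 fst E.
have /lshift_inj h_eq := congr1 snd E.
by apply: unpair_inj; move: p_eq h_eq; case: (unpair x) (unpair x') => [? ?] [? ?] /= -> ->.
Qed.

Lemma uncoded_scheme : scheme_exists true K a b (t + s) (q * t) (K * s).
Proof.
exists cache, message, decode; split.
  by move=> _; exists cache_pos => k; split; [exact: cache_pos_inj | move=> W x; rewrite ffunE].
move=> d d_ok W k; apply/ffunP => y; rewrite ffunE -[in RHS](splitK y).
case: (split y) => [h | y'] /=; last by rewrite ffunE unpairK.
case: pickP => [p /eqP pE | none]; first by rewrite ffunE /cache_pos unpairK /= pE.
by have [p pE] := inD_file_of (d_ok k); have := none p; rewrite pE eqxx.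
Qed.
End UncodedScheme.

Section CutSet.
Variables K a b : nat.
Hypothesis K2 : 2 <= K.
Local Notation q := (2 * a + b).
Local Notation N := (K * (a + b)).

Lemma even_user_lt (i : 'I_(K %/ 2)) : 2 * i < K.
Proof. by have := ltn_ord i; lia. Qed.

Definition even_user (i : 'I_(K %/ 2)) : 'I_K := Ordinal (even_user_lt i).

(* The window of user 2i is the interval [2i(a + b), 2i(a + b) + q), so the
   windows of distinct even users are disjoint. *)
Lemma even_window_fileE (i : 'I_(K %/ 2)) p :
  p < q -> window_file K a b (2 * i) p = i * (2 * (a + b)) + p.
Proof.
move=> pq; have := ltn_ord i => iK.
rewrite window_fileE //; last by lia.
by rewrite modn_small; [case: ifP; lia | lia].
Qed.

Lemma even_window_inj :
  injective (fun ip : 'I_(K %/ 2) * 'I_q => file_of (even_user ip.1) ip.2).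
Proof.
move=> [i p] [i' p'] /(congr1 val) /=; rewrite !even_window_fileE // => E.
have [pq p'q] := (ltn_ord p, ltn_ord p').
have [pn p'n] : p < 2 * (a + b) /\ p' < 2 * (a + b) by lia.
have ie : i = i' :> nat.
  have := congr1 (divn^~ (2 * (a + b))) E.
  by rewrite !divnMDl ?(divn_small pn) ?(divn_small p'n) ?addn0 //; lia.
have pe : p = p' :> nat by move: E; rewrite ie => /addnI.
by congr pair; apply: val_inj.
Qed.

Definition window_demand (j : 'I_q) : demand K N := [ffun k => file_of k j].

Lemma window_demand_valid j : valid_demand (window_demand j).
Proof. by move=> k; rewrite ffunE; apply: file_of_inD. Qed.

(* The caches of the K/2 even users together with the q messages answering
   the window demands determine all (K/2) q files of the even windows, hence
   carry at least as many bits. *)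
Lemma cutset_bound unc B c r : scheme_exists unc K a b B c r ->
  B * (K %/ 2 * q) <= c * (K %/ 2) + r * q.
Proof.
move=> [phi [psi [mu [_ decode_ok]]]].
pose F (ip : 'I_(K %/ 2) * 'I_q) := file_of (even_user ip.1) ip.2.
pose spread (v : {ffun 'I_(K %/ 2) * 'I_q -> file B}) : library N B :=
  [ffun f => if [pick ip | F ip == f] is Some ip then v ip else [ffun => false]].
have spreadE v ip : spread v (F ip) = v ip.
  rewrite ffunE; case: pickP => [ip' /eqP /even_window_inj -> // | none].
  by have := none ip; rewrite eqxx.
pose observe v := ([ffun i => phi (even_user i) (spread v)],
                   [ffun j => psi (window_demand j) (spread v)]).
have observe_inj : injective observe.
  move=> v v' [/ffunP caches /ffunP msgs]; apply/ffunP => [[i j]].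
  have dE : F (i, j) = window_demand j (even_user i) by rewrite ffunE.
  rewrite -!spreadE dE -!(decode_ok _ (window_demand_valid j)).
  by move: (caches i) (msgs j); rewrite !ffunE => -> ->.
have := leq_card observe observe_inj.
by rewrite card_prod !card_ffun !card_prod !card_ord card_bool -!expnM -expnD leq_exp2l.
Qed.
End CutSet.

Lemma uncoded_scheme_is_scheme unc K a b B c r :
  scheme_exists true K a b B c r -> scheme_exists unc K a b B c r.
Proof.
by move=> [phi [psi [mu [unc_phi dec]]]]; exists phi, psi, mu; split => // _; apply: unc_phi.
Qed.

Local Open Scope ring_scope.

Section Loads.
Variable R : realType.
Variables (K a b : nat) (M : R).
Hypotheses (K2 : (2 <= K)%N) (q_gt0 : (0 < 2 * a + b)%N) (M0 : 0 <= M).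
Local Notation q := (2 * a + b)%N.

(* (1 - M/q)^+: the fraction of a requested file missing from a cache of M
   files out of the q files the user may request. *)
Definition miss_fraction : R := Num.max 0 (1 - M / q%:R).

Lemma miss_fraction_ge0 : 0 <= miss_fraction.
Proof. by rewrite le_max lexx. Qed.

(* Loads are nonnegative and at least one load is achievable, so the optimal
   loads are well-defined infima. *)
Lemma loads_ge0 unc x : loads unc K a b M x -> 0 <= x.
Proof. by move=> [B [c [r [_ [_ [-> _]]]]]]; rewrite divr_ge0. Qed.

Lemma uncoded_loads_sub unc x : loads true K a b M x -> loads unc K a b M x.
Proof.
move=> [B [c [r [B0 [cM [-> sch]]]]]].
by exists B, c, r; do 3 split => //; apply: uncoded_scheme_is_scheme.
Qed.

Lemma uncoded_load B t : (0 < B)%N -> (t <= B)%N -> (q * t)%:R <= M * B%:R ->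
  loads true K a b M ((K * (B - t))%:R / B%:R).
Proof.
move=> B0 tB cM; have := uncoded_scheme a b t (B - t) K2; rewrite subnKC // => sch.
by exists B, (q * t)%N, (K * (B - t))%N.
Qed.

Lemma loads_nonempty unc : (loads unc K a b M !=set0)%classic.
Proof.
exists ((K * (1 - 0))%N%:R / 1%:R); apply: uncoded_loads_sub.
by apply: uncoded_load; rewrite // muln0 mulr1.
Qed.

Lemma cutset_load unc B c r : (0 < B)%N -> c%:R <= M * B%:R ->
  scheme_exists unc K a b B c r -> (K %/ 2)%:R * miss_fraction <= r%:R / B%:R.
Proof.
move=> B0 cM /(cutset_bound K2) count.
rewrite /miss_fraction /Num.max; case: ifP => _; last by rewrite mulr0 divr_ge0.
set u := (K %/ 2)%N in count *; set Q := q in count *.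
have countR : u%:R * Q%:R * B%:R <= u%:R * c%:R + r%:R * Q%:R :> R.
  by rewrite -!natrM -natrD ler_nat; move: count; lia.
have cacheR : u%:R * c%:R <= u%:R * (M * B%:R) :> R by rewrite ler_wpM2l.
have [B0' Q0] : 0 < B%:R :> R /\ 0 < Q%:R :> R by rewrite !ltr0n q_gt0.
rewrite -subr_ge0.
have -> : r%:R / B%:R - u%:R * (1 - M / Q%:R) =
  (r%:R * Q%:R - u%:R * Q%:R * B%:R + u%:R * M * B%:R) / (Q%:R * B%:R) :> R.
  by field; rewrite !gt_eqF.
by apply: divr_ge0; [lra | rewrite mulr_ge0 ?ltW].
Qed.

Lemma Ropt_ge : (K %/ 2)%:R * miss_fraction <= Ropt K a b M.
Proof.
apply: lb_le_inf; first exact: loads_nonempty.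
by move=> x [B [c [r [B0 [cM [-> sch]]]]]]; apply: cutset_load sch.
Qed.

(* Rounding the cached part down to a whole number t of bits out of B costs
   at most 1/B in the missing fraction. *)
Lemma memory_split B : (0 < B)%N -> exists2 t, (t <= B)%N &
  (q * t)%:R <= M * B%:R /\ (B - t)%:R / B%:R <= miss_fraction + B%:R^-1.
Proof.
move=> B0; have B0' : 0 < B%:R :> R by rewrite ltr0n.
have q0' : 0 < q%:R :> R by rewrite ltr0n.
set x := M * B%:R / q%:R; set n := Num.truncn x.
have x0 : 0 <= x by rewrite /x; apply: divr_ge0 => //; apply: mulr_ge0.
have /andP [nx xn] : n%:R <= x < n.+1%:R by apply: truncn_itv.
have qx : q%:R * x = M * B%:R by rewrite /x mulrC divfK ?gt_eqF.
case: (leqP B n) => [Bn | nB].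
  exists B => //; split; last by rewrite subnn mul0r addr_ge0 ?miss_fraction_ge0 // invr_ge0 ltW.
  by rewrite natrM -qx ler_pM2l // (le_trans _ nx) ?ler_nat.
exists n; first exact: ltnW.
split; first by rewrite natrM -qx ler_pM2l.
have Mn : M / q%:R <= n%:R / B%:R + B%:R^-1.
  have -> : n%:R / B%:R + B%:R^-1 = (n.+1)%:R / B%:R :> R.
    by rewrite -natr1 mulrDl mul1r.
  by rewrite ler_pdivlMr // mulrAC ltW.
have -> : (B - n)%:R / B%:R = 1 - n%:R / B%:R :> R.
  by rewrite natrB ?(ltnW nB) // mulrBl divff // gt_eqF.
have : 1 - M / q%:R <= miss_fraction by rewrite le_max lexx orbT.
lra.
Qed.

(* Letting B grow, uncoded placement achieves K (1 - M/q)^+. *)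
Lemma Ropt_u_le : Ropt_u K a b M <= K%:R * miss_fraction.
Proof.
have lbound : has_lbound (loads true K a b M) by exists 0 => x; apply: loads_ge0.
apply/ler_addgt0Pr => e e0.
set B := (Num.truncn (K%:R / e)).+1.
have B0 : 0 < B%:R :> R by rewrite ltr0n.
have KB : K%:R / B%:R < e by rewrite ltr_pdivrMr // mulrC -ltr_pdivrMr // truncnS_gt.
have [t tB [cM miss_t]] := memory_split (isT : (0 < B)%N).
apply: le_trans (ge_inf lbound (uncoded_load (isT : (0 < B)%N) tB cM)) _.
have K0 : 0 <= K%:R :> R by [].
rewrite natrM -mulrA; apply: (le_trans (ler_wpM2l K0 miss_t)).
by rewrite mulrDr lerD2l ltW.
Qed.
End Loads.

Lemma le_half_mul K : (2 <= K)%N -> (K <= (if odd K then 3 else 2) * (K %/ 2))%N.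
Proof. by move=> K2; have := modn2 K; case: (odd K) => /=; lia. Qed.

Theorem theorem2 (R : realType) (K a b : nat) (M : R) :
  (2 <= K)%N -> (1 <= a)%N -> (1 <= b)%N -> 0 <= M ->
  (~~ odd K -> Ropt_u K a b M <= 2 * Ropt K a b M) /\
  (odd K -> Ropt_u K a b M <= 3 * Ropt K a b M).
Proof.
move=> K2 a1 b1 M0; have q_gt0 : (0 < 2 * a + b)%N by lia.
have upper := Ropt_u_le K2 q_gt0 M0; have lower := Ropt_ge K2 q_gt0 M0.
suff ratio c : (K <= c * (K %/ 2))%N -> Ropt_u K a b M <= c%:R * Ropt K a b M.
  by have := le_half_mul K2; case: (odd K) => /ratio ratioK; split.
move=> Kc; apply: (le_trans upper); apply: le_trans (ler_wpM2l (ler0n _ c) lower).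
by rewrite mulrA -natrM ler_wpM2r ?miss_fraction_ge0 // ler_nat.
Qed.
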